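(* There is an algorithm that, given the codes $x^c,y^c\in\{0,1\}^{n-3}$ of two pyramidal tours $x,y\in PT_n$, decides whether the vertices $x^v$ and $y^v$ of $\mathrm{PYR}(n)$ are adjacent in time $O(n)$.
   Context: Let $K_n$ be the complete undirected graph on vertex set $\{1,\dots,n\}$ with edge set $E$. A Hamiltonian cycle $\langle 1,i_1,\dots,i_r,n,j_1,\dots,j_{n-r-2}\rangle$ is called a pyramidal tour if $i_1<i_2<\dots<i_r$ and $j_1>j_2>\dots>j_{n-r-2}$; tours are undirected. Let $PT_n$ be the set of all pyramidal tours. For $x\in PT_n$ its characteristic vector $x^v\in\mathbb{R}^E$ has $x^v_e=1$ if edge $e$ lies in $x$ and $0$ otherwise. The pyramidal tours polytope is $\mathrm{PYR}(n)=\operatorname{conv}\{x^v : x\in PT_n\}$. Every pyramidal tour contains the edge $\{1,2\}$; the tour is oriented so that vertex $2$ belongs to the increasing part. The code of $x$ is the $0/1$ vector $x^c=(x^c_3,\dots,x^c_{n-1})$ with $x^c_i=1$ if vertex $i$ is visited in the increasing part of $x$ and $x^c_i=0$ otherwise; $x\mapsto x^c$ is a bijection from $PT_n$ onto $\{0,1\}^{n-3}$. *)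

From HB Require Import structures.
From mathcomp Require Import all_boot all_order all_algebra.
Set Implicit Arguments. Unset Strict Implicit. Unset Printing Implicit Defensive.
Import Order.TTheory GRing.Theory Num.Theory.

(* The pyramidal tour with code c = (c_3,...,c_{n-1}) (c_i = nth (i-3)):
   1, 2, (increasing: vertices i in 3..n-1 with c_i = 1), n,
   (decreasing: vertices i in 3..n-1 with c_i = 0), back to 1. *)
Definition tour_seq (n : nat) (c : seq bool) : seq nat :=
  [:: 1; 2] ++ [seq i <- iota 3 (n - 3) | nth false c (i - 3)]
  ++ [:: n] ++ rev [seq i <- iota 3 (n - 3) | ~~ nth false c (i - 3)].

Definition tour_edge (n : nat) (c : seq bool) (i j : nat) : bool :=
  let t := tour_seq n c in
  [&& i \in t, j \in t & (next t i == j) || (next t j == i)].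

(* Edge set E of K_n: pairs (i,j) of 0-indexed vertices with i < j;
   ordinal k stands for vertex k+1. *)
Definition Edge (n : nat) := {p : 'I_n * 'I_n | p.1 < p.2}.

Definition charvec (R : realFieldType) (n : nat) (c : seq bool)
  : {ffun Edge n -> R} :=
  [ffun e : Edge n => ((tour_edge n c (val e).1.+1 (val e).2.+1)%:R)%R].

Definition dotE (R : realFieldType) (n : nat) (w x : {ffun Edge n -> R}) : R :=
  \sum_(e : Edge n) w e * x e.

(* x^v and y^v are adjacent vertices of PYR(n) = conv{ z^v : z in PT_n }:
   they are distinct and [x^v, y^v] is a face, i.e. some linear functional
   takes equal values on x^v, y^v and strictly smaller values on every
   other vertex. *)
Definition PYR_adjacent (R : realFieldType) (n : nat)
    (c d : (n - 3).-tuple bool) : Prop :=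
  charvec R n c != charvec R n d /\
  exists w : {ffun Edge n -> R},
    dotE w (charvec R n c) = dotE w (charvec R n d) /\
    forall z : (n - 3).-tuple bool,
      charvec R n z != charvec R n c -> charvec R n z != charvec R n d ->
      (dotE w (charvec R n z) < dotE w (charvec R n c))%R.

Inductive move := MLeft | MStay | MRight.

Definition move_int (m : move) : int :=
  match m with MLeft => (-1)%R | MStay => 0%R | MRight => 1%R end.

Record TM := {
  tm_k : nat;                                   (* number of tapes; tape 0 = input *)
  tm_state : finType;
  tm_sym : finType;
  tm_blank : tm_sym;
  tm_input : bool * bool -> tm_sym;
  tm_start : tm_state;
  tm_halt : tm_state -> option bool;            (* Some b: halting state, answer b *)
  tm_delta : tm_state -> {ffun 'I_tm_k -> tm_sym} ->
             tm_state * {ffun 'I_tm_k -> tm_sym * move}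
}.

Record config (M : TM) : Type := Config {
  cst : tm_state M;
  ctape : 'I_(tm_k M) -> int -> tm_sym M;
  chead : 'I_(tm_k M) -> int
}.
Arguments Config M : clear implicits.
Arguments tm_halt : clear implicits.
Arguments tm_delta : clear implicits.
Arguments tm_start : clear implicits.
Arguments tm_input : clear implicits.
Arguments tm_blank : clear implicits.

Definition tm_step (M : TM) (c : config M) : config M :=
  if tm_halt M (cst c) is Some _ then c else
  let rd := [ffun i => ctape c i (chead c i)] in
  let sa := tm_delta M (cst c) rd in
  @Config M sa.1
    (fun i p => if p == chead c i then (sa.2 i).1 else ctape c i p)
    (fun i => (chead c i + move_int (sa.2 i).2)%R).

Definition tm_init (M : TM) (inp : seq (bool * bool)) : config M :=
  @Config M (tm_start M)
    (fun i p => if [&& (i == 0 :> nat), (0 <= p)%R & (p < (size inp)%:Z)%R]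
                then tm_input M (nth (false, false) inp (absz p))
                else tm_blank M)
    (fun _ => 0%R).

(* M, started on inp, is in a halting state with answer b after t steps
   (halting states are absorbing, so it halted within t steps). *)
Definition tm_answers_within (M : TM) (inp : seq (bool * bool)) (t : nat)
    (b : bool) : Prop :=
  tm_halt M (cst (iter t (@tm_step M) (tm_init M inp))) = Some b.

From HB Require Import structures.
From mathcomp Require Import all_boot all_order all_algebra.
From mathcomp Require Import zify lra.
Set Implicit Arguments. Unset Strict Implicit. Unset Printing Implicit Defensive.
Import Order.TTheory GRing.Theory Num.Theory.

(* Read a pyramidal tour through its switch set: the vertices 1 < k < n - 1 such that k and
   k + 1 lie in different parts of the tour. The edges of the tour depend only on its switch
   set: {k, k + 1} is an edge iff k is not a switch, and {i, j} with j > i + 1 is an edge iff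
   i and j - 1 are consecutive elements of the switch set extended by 1 and n - 1.
   Two distinct tours x, y are adjacent iff their switch sets have no crossing, i.e. no
   differences d1 < m < d2 around a common switch m. Given a crossing, exchanging the switch
   sets of x and y after m yields two other tours whose characteristic vectors add up to
   x^v + y^v, so [x^v, y^v] is not an edge of PYR(n). Without one, x and y are the only tours
   using no edge outside x and y, so the functional that is 1 on the common edges, 0 on the
   other edges of x or y and -1 elsewhere exposes [x^v, y^v]. A crossing is detected by a
   finite automaton reading the pairs (x^c_i, y^c_i) from left to right, which a one-tape
   machine runs in n steps. *)

Lemma last_before (P : pred nat) lo k : P lo -> lo < k ->
  exists a, [/\ lo <= a, a < k, P a & forall m, a < m -> m < k -> ~~ P m].
Proof.
move=> Plo; elim: k => // k IH; rewrite ltnS leq_eqVlt => /orP[/eqP <-|lt].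
  by exists lo; split=> // m ? ?; lia.
case Pk: (P k).
  by exists k; split=> // [|m ? ?]; lia.
have [a [loa ak Pa amax]] := IH lt; exists a; split=> //; first lia.
move=> m am; rewrite ltnS leq_eqVlt => /orP[/eqP -> |]; [by rewrite Pk | exact: amax].
Qed.

Lemma first_after (P : pred nat) a hi : P hi -> a < hi ->
  exists b, [/\ a < b, b <= hi, P b & forall m, a < m -> m < b -> ~~ P m].
Proof.
move=> Phi ahi; have ex : exists b, (a < b) && P b by exists hi; rewrite ahi Phi.
case: (ex_minnP ex) => b /andP[ab Pb] bmin.
exists b; split=> //; first by apply: bmin; rewrite ahi Phi.
move=> m am mb; apply/negP => Pm.
by have := bmin m; rewrite am Pm => /(_ isT); lia.
Qed.

Lemma path_infix2 (T : eqType) (e : rel T) x p a b :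
  path e x p -> infix [:: a; b] (x :: p) -> e a b.
Proof.
elim: p x => [|y p IH] x /=; first by rewrite andbF.
by move=> /andP[exy pyp] /orP[/andP[/eqP-> /andP[/eqP-> _]] // | /(IH y pyp)].
Qed.

Lemma next_infix (T : eqType) (x : T) (p : seq T) a b :
  uniq (x :: p) -> a \in x :: p ->
  (next (x :: p) a == b) = infix [:: a; b] (rcons (x :: p) x).
Proof.
move=> up ap.
have next_of a' b' : infix [:: a'; b'] (rcons (x :: p) x) -> next (x :: p) a' = b'.
  by move=> ab; apply/eqP; apply: (path_infix2 (cycle_next up)).
apply/eqP/idP => [<-|/next_of //].
have [b' ab'] : exists b', infix [:: a; b'] (rcons (x :: p) x).
  case/splitPr: ap => p1 p2; rewrite rcons_cat rcons_cons.
  by case: p2 => [|y p2]; [exists x | exists y]; apply/infixP; exists p1; eexists.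
by rewrite (next_of _ _ ab').
Qed.

Lemma infix2_cat (T : eqType) (s r : seq T) y a b :
  infix [:: a; b] (s ++ y :: r) = infix [:: a; b] (rcons s y) || infix [:: a; b] (y :: r).
Proof.
elim: s => [|x s IH]; first by rewrite /= andbF.
rewrite cat_cons rcons_cons [infix _ (x :: _)]infix_consl IH.
by rewrite [infix _ (x :: _)]infix_consl -orbA; case: s {IH} => [|z s] /=; rewrite ?prefix0s.
Qed.

Lemma infix2_rev (T : eqType) (s : seq T) a b :
  infix [:: a; b] (rev s) = infix [:: b; a] s.
Proof. by rewrite -[[:: a; b]]/(rev [:: b; a]) infix_rev. Qed.

Lemma prefix1_sorted (s : seq nat) b : sorted ltn s ->
  prefix [:: b] s = (b \in s) && ~~ has (ltn^~ b) s.
Proof.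
case: s => [|y s] //= ys; have /allP gty := order_path_min ltn_trans ys.
rewrite prefix0s andbT inE; case: (eqVneq b y) => [->|neq] /=.
  by rewrite ltnn; apply/esym/hasPn => m /gty ym; rewrite -leqNgt ltnW.
by case bs: (b \in s); rewrite //= gty.
Qed.

Lemma infix2_sorted (s : seq nat) a b : sorted ltn s ->
  infix [:: a; b] s = [&& a \in s, b \in s, a < b & ~~ has (fun m => a < m < b) s].
Proof.
elim: s => [|x s IH] //= xs; have ss := path_sorted xs.
have /allP gtx := order_path_min ltn_trans xs.
rewrite IH // !inE; case: (eqVneq a x) => [->|ax] /=.
  have xs' : x \in s = false by apply/negP => /gtx; rewrite ltnn.
  rewrite prefix1_sorted // ltnn xs' /= orbF.
  case: (eqVneq b x) => [->|bx] /=; first by rewrite ltnn xs'.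
  case bs: (b \in s) => //=; rewrite (gtx b bs) /=; congr (~~ _).
  by apply: eq_in_has => m /gtx ->.
case as_: (a \in s) => //=; have ax' := leq_gtF (ltnW (gtx a as_)).
by case: (eqVneq b x) => [->|bx] /=; rewrite ax' /= ?andbF.
Qed.

(* For tours on n vertices, N = n - 1. *)
Section SwitchSet.
Variable N : nat.

Definition inner k := 1 < k < N.
Definition node (B : nat -> bool) k := (k == 1) || (k == N) || inner k && B k.
Definition arc (B : nat -> bool) a b :=
  [/\ a < b, node B a, node B b & forall m, a < m -> m < b -> ~~ node B m].
Definition arcb (B : nat -> bool) a b :=
  [&& node B a, node B b & all (fun m => ~~ node B m) (iota a.+1 (b - a.+1))].
Definition edgeB (B : nat -> bool) i j :=
  if j == i.+1 then ~~ (inner i && B i) else arcb B i j.-1.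

Definition differ (Bx By : nat -> bool) k := inner k && (Bx k != By k).
Definition crossing (Bx By : nat -> bool) d1 m d2 :=
  [&& d1 < m < d2, differ Bx By d1, Bx m && By m & differ Bx By d2].
Definition crossing_free (Bx By : nat -> bool) := forall d1 m d2, ~~ crossing Bx By d1 m d2.
Definition crossover (B1 B2 : nat -> bool) m k := if k <= m then B1 k else B2 k.
Definition common_node (Bx By : nat -> bool) k := node Bx k && node By k.

Lemma arcP (B : nat -> bool) a b : a < b -> reflect (arc B a b) (arcb B a b).
Proof.
move=> ab; apply: (iffP and3P) => [[na nb /allP nm]|[_ na nb nm]]; split=> //.
  by move=> m am mb; apply: nm; rewrite mem_iota; lia.
by apply/allP => m; rewrite mem_iota => Hm; apply: nm; lia.
Qed.

Lemma arc_uniq (B : nat -> bool) a b b' : arc B a b -> arc B a b' -> b = b'.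
Proof.
move=> [ab _ nb nm] [ab' _ nb' nm'].
case: (ltngtP b b') => // [bb'|b'b]; first by move: (nm' b ab bb'); rewrite nb.
by move: (nm b' ab' b'b); rewrite nb'.
Qed.

Lemma node1 (B : nat -> bool) : node B 1. Proof. by rewrite /node eqxx. Qed.
Lemma nodeN (B : nat -> bool) : node B N. Proof. by rewrite /node eqxx orbT. Qed.

Lemma node_inner (B : nat -> bool) k : inner k -> node B k = B k.
Proof. by move=> /andP[k1 kN]; rewrite /node /inner k1 kN (gtn_eqF k1) (ltn_eqF kN). Qed.

Lemma node_leN (B : nat -> bool) k : 0 < N -> node B k -> k <= N.
Proof. by rewrite /node /inner => N0 /orP[/orP[]/eqP->|/andP[/andP[_ /ltnW]]]. Qed.

Lemma node_gt0 (B : nat -> bool) k : 0 < N -> node B k -> 0 < k.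
Proof. by rewrite /node /inner => N0 /orP[/orP[]/eqP->|/andP[/andP[/ltnW]]]. Qed.

Lemma arc_to (B : nat -> bool) k : 1 < k -> node B k -> exists a, arc B a k.
Proof.
move=> k1 nk; have [a [_ ak na amax]] := last_before (node1 B) k1.
by exists a; split.
Qed.

Lemma arc_from (B : nat -> bool) a : a < N -> node B a -> exists b, arc B a b.
Proof.
move=> aN na; have [b [ab _ nb bmin]] := first_after (nodeN B) aN.
by exists b; split.
Qed.

Lemma edgeB_short (B : nat -> bool) i : edgeB B i i.+1 = ~~ (inner i && B i).
Proof. by rewrite /edgeB eqxx. Qed.

Lemma edgeB_long (B : nat -> bool) a b : a < b -> edgeB B a b.+1 = arcb B a b.
Proof. by move=> ab; rewrite /edgeB eqSS (gtn_eqF ab). Qed.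

Lemma edgeB_local (B1 B2 : nat -> bool) i j : i < j ->
  (forall k, i <= k -> k < j -> B1 k = B2 k) -> edgeB B1 i j = edgeB B2 i j.
Proof.
move=> ij E.
have nd k : i <= k -> k < j -> node B1 k = node B2 k by move=> ik kj; rewrite /node E.
rewrite /edgeB; case: eqP => _; first by rewrite E.
rewrite /arcb (nd i) // (nd j.-1); try lia.
congr (_ && (_ && _)); apply: eq_in_all => m; rewrite mem_iota => Hm.
by rewrite nd //; lia.
Qed.

Lemma edgeB_ext (B1 B2 : nat -> bool) i j :
  (forall k, inner k -> B1 k = B2 k) -> edgeB B1 i j = edgeB B2 i j.
Proof.
move=> E; have E' k : inner k && B1 k = inner k && B2 k.
  by case ik: (inner k); rewrite //= E.
have nd k : node B1 k = node B2 k by rewrite /node E'.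
rewrite /edgeB /arcb E' !nd; congr (if _ then _ else _ && (_ && _)).
by apply: eq_all => m; rewrite nd.
Qed.

Lemma edgeB_blocked (B : nat -> bool) i j m :
  i < m -> m < j.-1 -> node B m -> edgeB B i j = false.
Proof.
move=> im mj nm; rewrite /edgeB; case: eqP => [?|_]; first lia.
by apply/negP => /(arcP B (ltn_trans im mj)) [_ _ _ /(_ m im mj)]; rewrite nm.
Qed.

(* Edges on one side of a common switch m only see the switch set on that side; an edge
   passing over m is in none of the four tours. *)
Lemma edgeB_crossover (B1 B2 : nat -> bool) m i j : inner m -> B1 m -> B2 m -> i < j ->
  (edgeB B1 i j : nat) + edgeB B2 i j =
  (edgeB (crossover B1 B2 m) i j : nat) + edgeB (crossover B2 B1 m) i j.
Proof.
move=> im b1 b2 ij; rewrite /crossover.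
case: (leqP j m.+1) => jm.
  rewrite (@edgeB_local (fun k => if k <= m then B1 k else B2 k) B1) //; last first.
    by move=> k _ kj; have -> : k <= m by lia.
  rewrite (@edgeB_local (fun k => if k <= m then B2 k else B1 k) B2) //.
  by move=> k _ kj; have -> : k <= m by lia.
case: (leqP m i) => mi.
  rewrite (@edgeB_local (fun k => if k <= m then B1 k else B2 k) B2) //; last first.
    move=> k ik _; case: leqP => km //; have -> : k = m by lia.
    by rewrite b1 b2.
  rewrite (@edgeB_local (fun k => if k <= m then B2 k else B1 k) B1) 1?addnC //.
  move=> k ik _; case: leqP => km //; have -> : k = m by lia.
  by rewrite b1 b2.
have mj : m < j.-1 by lia.
by rewrite !(@edgeB_blocked _ i j m) // node_inner ?leqnn.
Qed.

Section Cover.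
Variables Bx By Bz : nat -> bool.
Hypothesis N_gt1 : 1 < N.
Hypothesis cover : forall i j, 1 <= i -> i < j -> j <= N.+1 ->
  edgeB Bz i j -> edgeB Bx i j || edgeB By i j.

Lemma cover_common_switch k : inner k -> Bx k -> By k -> Bz k.
Proof.
move=> ik bx by_; case bz: (Bz k) => //; have /andP[k1 kN] := ik.
by have := cover (ltnW k1) (ltnSn k) (leqW kN); rewrite !edgeB_short ik bx by_ bz => /(_ isT).
Qed.

Lemma cover_common_node k : common_node Bx By k -> node Bz k.
Proof.
case/andP; rewrite /node; case: (k == 1) => //=; case: (k == N) => //=.
by move=> /andP[ik bx] /andP[_ by_]; rewrite ik (cover_common_switch ik bx by_).
Qed.

Lemma cover_arc a b : 1 <= a -> arc Bz a b -> arc Bx a b \/ arc By a b.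
Proof.
move=> a1 [ab na nb nm]; have bN : b <= N := node_leN (ltnW N_gt1) nb.
have /(cover a1 (ltn_trans ab (ltnSn b)) bN) : edgeB Bz a b.+1.
  by rewrite edgeB_long //; apply/arcP => //; split.
by rewrite !edgeB_long // => /orP[/(arcP _ ab)|/(arcP _ ab)]; [left|right].
Qed.

Lemma cover_agree k : inner k -> Bx k = By k -> Bz k = Bx k.
Proof.
move=> ik exy; case bx: (Bx k); first by apply: cover_common_switch; rewrite // -exy.
apply/negP => bz; have /andP[k1 _] := ik.
have [a aZ] : exists a, arc Bz a k by apply: arc_to k1 _; rewrite node_inner.
have a1 : 1 <= a by case: aZ => _ na _ _; apply: node_gt0 (ltnW N_gt1) na.
by case: (cover_arc a1 aZ) => -[_ _]; rewrite node_inner // -?exy bx.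
Qed.

(* Strong induction on k: every arc of z is an arc of x or of y, and between u and v no
   node of x is a node of y, so z cannot switch from following x to following y. *)
Lemma cover_follow u v s : 1 <= u -> u < v -> v <= N -> node Bz u -> node Bx u ->
  (forall k, u < k -> k < v -> node Bx k -> ~~ node By k) ->
  arc Bx u s -> arc Bz u s -> forall k, u < k -> k < v -> node Bz k = node Bx k.
Proof.
move=> u1 uv vN nzu nxu xonly axs azs; elim/ltn_ind=> k IH uk kv.
have k1 : 1 < k := leq_ltn_trans u1 uk.
apply/idP/idP => nk.
- have [a aZ] := arc_to k1 nk; have [ak _ _ _] := aZ.
  case: (ltngtP a u) => au.
  + by case: aZ => _ _ _ /(_ u au uk); rewrite nzu.
  + have nxa : node Bx a by rewrite -(IH a ak au (ltn_trans ak kv)); case: aZ.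
    case: (cover_arc (ltnW (leq_ltn_trans u1 au)) aZ) => [[]//|[_ nya _ _]].
    by move: (xonly a au (ltn_trans ak kv) nxa); rewrite nya.
  + by move: aZ; rewrite au => /(arc_uniq azs) <-; case: axs.
- have [a aX] := arc_to k1 nk; have [ak nxa _ _] := aX.
  case: (ltngtP a u) => au.
  + by case: aX => _ _ _ /(_ u au uk); rewrite nxu.
  + have nza : node Bz a by rewrite (IH a ak au (ltn_trans ak kv)).
    have [b aZb] := arc_from (leq_trans (ltn_trans ak kv) vN) nza.
    case: (cover_arc (ltnW (leq_ltn_trans u1 au)) aZb) => [aXb|[_ nya _ _]].
    * by rewrite (arc_uniq aX aXb); case: aZb.
    * by move: (xonly a au (ltn_trans ak kv) nxa); rewrite nya.
  + by move: aX; rewrite au => /(arc_uniq axs) <-; case: azs.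
Qed.

End Cover.

Lemma common_node_inner (Bx By : nat -> bool) k :
  inner k -> common_node Bx By k = Bx k && By k.
Proof. by move=> ik; rewrite /common_node !node_inner. Qed.

Lemma differ_between (Bx By : nat -> bool) u v d k : crossing_free Bx By ->
  common_node Bx By u -> common_node Bx By v -> u < d < v ->
  differ Bx By d -> differ Bx By k -> u < k < v.
Proof.
move=> cf cu cv /andP[ud dv] Dd Dk.
have /andP[/andP[d1 dN] _] := Dd; have /andP[/andP[k1 kN] xyk] := Dk.
apply/andP; split.
- rewrite ltnNge; apply/negP => ku.
  have iu : inner u by apply/andP; split; lia.
  move: cu; rewrite common_node_inner // => /andP[bxu byu].
  move: ku; rewrite leq_eqVlt => /orP[/eqP ku|ku]; first by move: xyk; rewrite ku bxu byu.
  by move: (cf k u d); rewrite /crossing ku ud Dk Dd bxu byu.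
- rewrite ltnNge; apply/negP => vk.
  have iv : inner v by apply/andP; split; lia.
  move: cv; rewrite common_node_inner // => /andP[bxv byv].
  move: vk; rewrite leq_eqVlt => /orP[/eqP vk|vk]; first by move: xyk; rewrite -vk bxv byv.
  by move: (cf d v k); rewrite /crossing dv vk Dk Dd bxv byv.
Qed.

Lemma cover_switch_eq (Bx By Bz : nat -> bool) : 1 < N -> crossing_free Bx By ->
  (forall i j, 1 <= i -> i < j -> j <= N.+1 -> edgeB Bz i j -> edgeB Bx i j || edgeB By i j) ->
  (exists d, differ Bx By d) ->
  (forall k, inner k -> Bz k = Bx k) \/ (forall k, inner k -> Bz k = By k).
Proof.
move=> N1 cf cover [d Dd]; have /andP[id xyd] := Dd; have /andP[d1 dN] := id.
have c1 : common_node Bx By 1 by rewrite /common_node !node1.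
have cN : common_node Bx By N by rewrite /common_node !nodeN.
have [u [u1 ud cu umax]] := last_before c1 d1.
have [v [dv vN cv vmin]] := first_after cN dN.
have between k : differ Bx By k -> u < k < v.
  by move=> Dk; apply: (differ_between cf cu cv _ Dd Dk); rewrite ud dv.
have [nxu nyu] := andP cu.
have nocommon k : u < k -> k < v -> node Bx k -> ~~ node By k.
  move=> uk kv nxk; apply/negP => nyk; have ck : common_node Bx By k by apply/andP.
  case: (ltngtP k d) => kd; first by move: (umax k uk kd); rewrite ck.
    by move: (vmin k kd kv); rewrite ck.
  by move: ck xyd; rewrite kd common_node_inner // => /andP[-> ->].
have nzu := cover_common_node cover cu.
have outside k : inner k -> ~~ (u < k < v) -> Bz k = Bx k /\ Bx k = By k.
  move=> ik ko; have exy : Bx k = By k.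
    by apply/eqP; apply: contraNT ko => xyk; apply: between; rewrite /differ ik.
  by split=> //; exact: (cover_agree N1 cover ik exy).
have cover' i j : 1 <= i -> i < j -> j <= N.+1 -> edgeB Bz i j -> edgeB By i j || edgeB Bx i j.
  by move=> i1 ij jN /(cover i j i1 ij jN); rewrite orbC.
have [s azs] := arc_from (ltn_trans ud dN) nzu.
case: (cover_arc N1 cover u1 azs) => ars; [left|right] => k ik.
- case/boolP: (u < k < v) => [/andP[uk kv]|ko]; last by case: (outside k ik ko).
  rewrite -(node_inner Bz ik) -(node_inner Bx ik).
  exact: (cover_follow N1 cover u1 (ltn_trans ud dv) vN nzu nxu nocommon ars azs).
- case/boolP: (u < k < v) => [/andP[uk kv]|ko]; last by case: (outside k ik ko) => -> ->.
  rewrite -(node_inner Bz ik) -(node_inner By ik).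
  apply: (cover_follow N1 cover' u1 (ltn_trans ud dv) vN nzu nyu _ ars azs) => // k' uk' k'v.
  by apply: contraL; apply: nocommon.
Qed.

End SwitchSet.

(* side c k : vertex k lies in the increasing part ([true]) or in the decreasing part;
   vertex 2 is always increasing. The vertices 1 and n lie on both sides; chain n c true is
   the increasing part of the tour, chain n c false its decreasing part read backwards. *)
Definition side (c : seq bool) k := if k == 2 then true else nth false c (k - 3).
Definition switch (c : seq bool) k := side c k != side c k.+1.
Definition on_side n c (s : bool) k := (k == 1) || (k == n) || (1 < k < n) && (side c k == s).
Definition chain n c s := [seq k <- iota 1 n | on_side n c s k].
Definition side_link n c s i j :=
  [&& on_side n c s i, on_side n c s j & all (fun m => ~~ on_side n c s m) (iota i.+1 (j - i.+1))].

Lemma side_const (c : seq bool) i j : (forall m, i < m -> m < j.-1 -> ~~ switch c m) ->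
  forall m, i < m -> m < j -> side c m = side c i.+1.
Proof.
move=> noswitch; elim=> // m IH; rewrite ltnS leq_eqVlt => /orP[/eqP-> //|im] mj.
rewrite -(IH im (ltnW mj)).
by move: (noswitch m im ltac:(lia)); rewrite /switch; case: (side c m); case: (side c m.+1).
Qed.

Section Tour.
Variables (n : nat) (c : seq bool).
Hypothesis n3 : 3 <= n.

Let inc := [seq i <- iota 3 (n - 3) | nth false c (i - 3)].
Let dec := [seq i <- iota 3 (n - 3) | ~~ nth false c (i - 3)].

Lemma on_side1 s : on_side n c s 1. Proof. by rewrite /on_side eqxx. Qed.
Lemma on_siden s : on_side n c s n. Proof. by rewrite /on_side eqxx orbT. Qed.

Lemma on_side_inner s k : 1 < k < n -> on_side n c s k = (side c k == s).
Proof.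
by move=> /[dup] /andP[k1 kn] kk; rewrite /on_side kk (gtn_eqF k1) (ltn_eqF kn).
Qed.

Lemma on_side2 s : on_side n c s 2 = s.
Proof. by rewrite on_side_inner /side //=; case: s. Qed.

Lemma on_side_mid s k : 3 <= k < n -> on_side n c s k = (nth false c (k - 3) == s).
Proof.
move=> Hk; rewrite on_side_inner; last lia.
by rewrite /side ifN_eq //; lia.
Qed.

Lemma iota_split : iota 1 n = [:: 1; 2] ++ iota 3 (n - 3) ++ [:: n].
Proof.
rewrite {1}(_ : n = 2 + (n - 3) + 1); last lia.
by rewrite !iotaD -catA /=; congr (_ :: _ :: _ ++ [:: _]); lia.
Qed.

Lemma filter_on_side s : [seq k <- iota 3 (n - 3) | on_side n c s k] =
  [seq k <- iota 3 (n - 3) | nth false c (k - 3) == s].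
Proof. by apply: eq_in_filter => k; rewrite mem_iota => Hk; rewrite on_side_mid //; lia. Qed.

Lemma chain_true : chain n c true = [:: 1; 2] ++ inc ++ [:: n].
Proof.
rewrite /chain iota_split !filter_cat /= on_side2 on_siden filter_on_side.
by under eq_filter do rewrite eqb_id.
Qed.

Lemma chain_false : chain n c false = [:: 1] ++ dec ++ [:: n].
Proof.
rewrite /chain iota_split !filter_cat /= on_side2 on_siden filter_on_side.
by under eq_filter do rewrite eqbF_neg.
Qed.

Lemma chain_sorted s : sorted ltn (chain n c s).
Proof. by rewrite /chain; apply: sorted_filter; [exact: ltn_trans | exact: iota_ltn_sorted]. Qed.

Lemma tour_chains : tour_seq n c = chain n c true ++ rev dec.
Proof. by rewrite chain_true -!catA. Qed.

Lemma tour_uniq : uniq (tour_seq n c).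
Proof.
rewrite tour_chains cat_uniq rev_uniq filter_uniq ?iota_uniq ?andbT //.
rewrite /chain filter_uniq ?iota_uniq //= andbT; apply/hasPn => x.
rewrite mem_rev mem_filter mem_iota => /andP[nx Hx].
by rewrite mem_filter on_side_mid ?(negbTE nx) //; lia.
Qed.

Lemma mem_chain_tour s x : x \in chain n c s -> x \in tour_seq n c.
Proof.
case: s; first by rewrite tour_chains mem_cat => ->.
rewrite chain_false tour_chains chain_true !mem_cat !inE mem_rev.
by case/orP => [->|/orP[->|->]]; rewrite ?orbT.
Qed.

Lemma next_tour a b : a \in tour_seq n c ->
  (next (tour_seq n c) a == b) =
  infix [:: a; b] (chain n c true) || infix [:: b; a] (chain n c false).
Proof.
have [t Et] : exists t, tour_seq n c = 1 :: t by eexists.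
move: (tour_uniq); rewrite Et => ut ta; rewrite next_infix // -Et.
have -> : rcons (tour_seq n c) 1 = ([:: 1; 2] ++ inc) ++ n :: rcons (rev dec) 1.
  by rewrite /tour_seq -!cats1 -!catA.
rewrite infix2_cat; congr (_ || _); first by rewrite chain_true catA cats1.
by rewrite -infix2_rev chain_false rev_cons rev_rcons revK cats1.
Qed.

Lemma tour_edge_chain i j : i < j ->
  tour_edge n c i j = infix [:: i; j] (chain n c true) || infix [:: i; j] (chain n c false).
Proof.
move=> ij; rewrite /tour_edge.
have ordered s a b : infix [:: a; b] (chain n c s) ->
    [&& a \in chain n c s, b \in chain n c s & a < b].
  by rewrite infix2_sorted ?chain_sorted // => /and4P[-> -> ->].
have ji s : infix [:: j; i] (chain n c s) = false.
  by apply/negP => /ordered /and3P[_ _]; rewrite (leq_gtF (ltnW ij)).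
apply/idP/idP => [/and3P[it jt /orP[]]|
                  /orP[] /[dup] /ordered /and3P[/mem_chain_tour it /mem_chain_tour jt _]].
- by rewrite next_tour // ji orbF => ->.
- by rewrite next_tour // ji /= => ->; rewrite orbT.
- by rewrite it jt next_tour // => ->.
- by rewrite it jt [next _ j == i]next_tour // => ->; rewrite !orbT.
Qed.

Lemma infix_chain s i j : 1 <= i -> i < j -> j <= n ->
  infix [:: i; j] (chain n c s) = side_link n c s i j.
Proof.
move=> i1 ij jn; rewrite infix2_sorted ?chain_sorted // !mem_filter !mem_iota /side_link.
have -> : 1 <= i < 1 + n by lia.
have -> : 1 <= j < 1 + n by lia.
rewrite ij !andbT; congr (_ && (_ && _)).
apply/hasPn/allP => gap m.
- rewrite mem_iota => Hm; apply/negP => sm.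
  have /gap : m \in chain n c s by rewrite mem_filter sm mem_iota; lia.
  by have -> : i < m < j by lia.
- rewrite mem_filter mem_iota => /andP[sm Hm]; apply/negP => /andP[im mj].
  have /gap : m \in iota i.+1 (j - i.+1) by rewrite mem_iota; lia.
  by rewrite sm.
Qed.

Lemma side_link_short i : 1 <= i -> i < n ->
  side_link n c true i i.+1 || side_link n c false i i.+1 = ~~ (inner n.-1 i && switch c i).
Proof.
move=> i1 iN; rewrite /side_link subnn /= !andbT /inner.
have -> : i < n.-1 = (i.+1 < n) by lia.
case: (ltngtP i 1) => [|i_gt1|->]; first lia.
- case: (ltnP i.+1 n) => iN' /=.
    rewrite !on_side_inner /switch; [|lia..].
    by case: (side c i); case: (side c i.+1).
  have -> : i.+1 = n by lia.
  by rewrite !on_siden !andbT !on_side_inner ?i_gt1 //; case: (side c i).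
- by rewrite !on_side1 !on_side2.
Qed.

Lemma arc_of_side_link s i j : 1 <= i -> i.+1 < j -> j <= n ->
  side_link n c s i j -> arc n.-1 (switch c) i j.-1.
Proof.
move=> i1 ij jn /and3P[si sj /allP gap].
have off m : i < m -> m < j -> side c m != s.
  move=> im mj; have := gap m; rewrite mem_iota on_side_inner; last lia.
  by move=> /(_ ltac:(lia)).
clear gap; split; first lia.
- case: (ltngtP i 1) => [|i_gt1|->]; [lia| |exact: node1].
  rewrite node_inner; last (rewrite /inner; lia).
  move: si (off i.+1 (ltnSn i) ij); rewrite on_side_inner /switch; last lia.
  by case: (side c i); case: (side c i.+1); case: s {sj off}.
- case: (ltngtP j n) => [jn'| |->]; [|lia|exact: nodeN].
  rewrite node_inner /switch; last (rewrite /inner; lia).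
  move: sj (off j.-1 ltac:(lia) ltac:(lia)); rewrite on_side_inner ?prednK; [|lia..].
  by case: (side c j); case: (side c j.-1); case: s {si off}.
- move=> m im mj; rewrite node_inner /switch; last (rewrite /inner; lia).
  move: (off m im ltac:(lia)) (off m.+1 ltac:(lia) ltac:(lia)).
  by case: (side c m); case: (side c m.+1); case: s {si sj off}.
Qed.

Lemma side_link_of_arc i j : 1 <= i -> i.+1 < j -> j <= n ->
  arc n.-1 (switch c) i j.-1 -> side_link n c (~~ side c i.+1) i j.
Proof.
move=> i1 ij jn [_ ni nj nm].
have nosw m : i < m -> m < j.-1 -> ~~ switch c m.
  by move=> im mj; have := nm m im mj; rewrite node_inner //; rewrite /inner; lia.
have mid := side_const nosw.
apply/and3P; split.
- case: (ltngtP i 1) => [|i_gt1|->]; [lia| |exact: on_side1].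
  move: ni; rewrite on_side_inner ?node_inner /switch; [|rewrite /inner; lia..].
  by case: (side c i); case: (side c i.+1).
- case: (ltngtP j n) => [jn'| |->]; [|lia|exact: on_siden].
  move: nj; rewrite on_side_inner ?node_inner /switch ?prednK; [|rewrite /inner; lia..].
  rewrite (mid j.-1); [|lia..].
  by case: (side c j); case: (side c i.+1).
- apply/allP => m; rewrite mem_iota => Hm.
  by rewrite on_side_inner ?mid; [case: (side c i.+1)|lia..].
Qed.

Lemma side_link_long i j : 1 <= i -> i.+1 < j -> j <= n ->
  side_link n c true i j || side_link n c false i j = arcb n.-1 (switch c) i j.-1.
Proof.
move=> i1 ij jn; have ij' : i < j.-1 by lia.
apply/idP/(@arcP n.-1 (switch c) i j.-1 ij').
  by case/orP; apply: arc_of_side_link.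
move/(side_link_of_arc i1 ij jn).
by case: (side c i.+1) => /= ->; rewrite ?orbT.
Qed.

Lemma tour_edge_switch i j : 1 <= i -> i < j -> j <= n ->
  tour_edge n c i j = edgeB n.-1 (switch c) i j.
Proof.
move=> i1 ij jn; rewrite tour_edge_chain // !infix_chain // /edgeB.
case: ifP => [/eqP Ej|/eqP Ej]; first by rewrite Ej side_link_short //; lia.
by rewrite side_link_long //; lia.
Qed.

End Tour.

Definition edge_in n c (e : Edge n) := tour_edge n c (val e).1.+1 (val e).2.+1.

Lemma charvecE (R : realFieldType) n c e : charvec R n c e = (edge_in c e)%:R%R.
Proof. by rewrite ffunE. Qed.

Lemma edge_in_switch n c (e : Edge n) : 3 <= n ->
  edge_in c e = edgeB n.-1 (switch c) (val e).1.+1 (val e).2.+1.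
Proof. by move=> n3; case: e => [[a b] /= ab]; apply: tour_edge_switch. Qed.

Lemma exists_edge n i j : 1 <= i -> i < j -> j <= n ->
  exists e : Edge n, (val e).1.+1 = i /\ (val e).2.+1 = j.
Proof.
move=> i1 ij jn; have lti : i.-1 < n by lia.
have ltj : j.-1 < n by lia.
have ltij : i.-1 < j.-1 by lia.
by exists (exist (fun p : 'I_n * 'I_n => p.1 < p.2) (Ordinal lti, Ordinal ltj) ltij) => /=; lia.
Qed.

Lemma charvec_switch_eq (R : realFieldType) n (c d : seq bool) : 3 <= n ->
  (forall k, inner n.-1 k -> switch c k = switch d k) -> charvec R n c = charvec R n d.
Proof.
move=> n3 E; apply/ffunP => e.
by rewrite !charvecE !edge_in_switch // (edgeB_ext _ _ E).
Qed.

Lemma charvec_switch_neq (R : realFieldType) n (c d : seq bool) k : 3 <= n ->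
  differ n.-1 (switch c) (switch d) k -> charvec R n c != charvec R n d.
Proof.
move=> n3 /andP[ik Dk]; apply/negP => /eqP/ffunP E.
have [e [e1 e2]] : exists e : Edge n, (val e).1.+1 = k /\ (val e).2.+1 = k.+1.
  by apply: exists_edge; move: ik; rewrite /inner; lia.
move: (E e); rewrite !charvecE !edge_in_switch // e1 e2 !edgeB_short ik /=.
by move/eqP; rewrite eqr_nat; move: Dk; case: (switch c k); case: (switch d k).
Qed.

Fixpoint side_of_switch (B : nat -> bool) k : bool :=
  if k is k'.+1 then (if k' < 2 then true else side_of_switch B k' (+) B k') else true.

Definition code_of_switch n (B : nat -> bool) : (n - 3).-tuple bool :=
  [tuple side_of_switch B (val i + 3) | i < n - 3].

Lemma side_code_of_switch n B k : 2 <= k -> k < n ->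
  side (code_of_switch n B) k = side_of_switch B k.
Proof.
move=> k2 kn; rewrite /side; case: eqP => [->//|k_ne2].
have H : k - 3 < n - 3 by lia.
rewrite -[k - 3]/(nat_of_ord (Ordinal H)) nth_mktuple /=.
by have -> : k - 3 + 3 = k by lia.
Qed.

Lemma switch_code_of_switch n B k : inner n.-1 k -> switch (code_of_switch n B) k = B k.
Proof.
move=> /andP[k1 kn]; rewrite /switch !side_code_of_switch //=; try lia.
have -> : (k < 2) = false by lia.
by case: (side_of_switch B k); case: (B k).
Qed.

Lemma edge_in_crossover n (c d : seq bool) m (e : Edge n) : 3 <= n ->
  inner n.-1 m -> switch c m -> switch d m ->
  (edge_in (code_of_switch n (crossover (switch c) (switch d) m)) e : nat)
  + edge_in (code_of_switch n (crossover (switch d) (switch c) m)) e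
  = (edge_in c e : nat) + edge_in d e.
Proof.
move=> n3 im cm dm; rewrite !edge_in_switch //.
rewrite (edgeB_ext _ _ (switch_code_of_switch (crossover (switch c) (switch d) m))).
rewrite (edgeB_ext _ _ (switch_code_of_switch (crossover (switch d) (switch c) m))).
by symmetry; apply: edgeB_crossover => //; case: e => [[a b] /= ab].
Qed.

Definition diff_upto (c d : seq bool) t := has (fun k => switch c k != switch d k) (iota 2 t).
Definition common_after_diff_upto (c d : seq bool) t :=
  has (fun m => switch c m && switch d m && diff_upto c d (m - 2)) (iota 2 t).
Definition crossing_upto (c d : seq bool) t :=
  has (fun k => (switch c k != switch d k) && common_after_diff_upto c d (k - 2)) (iota 2 t).

Lemma mem_iota_inner n k : (k \in iota 2 (n - 3)) = inner n.-1 k.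
Proof. by rewrite mem_iota /inner; apply/idP/idP; lia. Qed.

Section Adjacency.
Variables (R : realFieldType) (n : nat) (c d : (n - 3).-tuple bool).
Hypothesis n3 : 3 <= n.
Local Notation Bc := (switch c).
Local Notation Bd := (switch d).

Lemma diff_uptoP : reflect (exists k, differ n.-1 Bc Bd k) (diff_upto c d (n - 3)).
Proof.
apply: (iffP hasP) => [[k kin D]|[k /andP[ik D]]]; exists k => //.
by rewrite /differ -mem_iota_inner kin.
by rewrite mem_iota_inner.
Qed.

Lemma crossing_uptoP :
  reflect (exists d1 m d2, crossing n.-1 Bc Bd d1 m d2) (crossing_upto c d (n - 3)).
Proof.
apply: (iffP hasP) => [[d2 i2 /andP[D2 /hasP[m im /andP[Cm /hasP[d1 i1 D1]]]]]|].
  move: i1 im i2; rewrite !mem_iota => i1 im i2; exists d1, m, d2.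
  by rewrite /crossing /differ /inner D1 Cm D2 /=; lia.
move=> [d1 [m [d2 /and4P[/andP[d1m md2] /andP[i1 D1] Cm /andP[i2 D2]]]]].
exists d2; first by rewrite mem_iota_inner.
rewrite D2; apply/hasP; exists m; first by rewrite mem_iota; move: i1 i2; rewrite /inner; lia.
rewrite Cm; apply/hasP; exists d1 => //.
by rewrite mem_iota; move: i1; rewrite /inner; lia.
Qed.

Lemma PYR_adjacent_differ : PYR_adjacent R c d -> diff_upto c d (n - 3).
Proof.
case: diff_uptoP => // nodiff [neq _]; case/negP: neq; apply/eqP.
apply: charvec_switch_eq => // k ik; case: (eqVneq (switch c k) (switch d k)) => // D.
by case: nodiff; exists k; rewrite /differ ik D.
Qed.

Lemma PYR_adjacent_crossing_free : PYR_adjacent R c d -> ~~ crossing_upto c d (n - 3).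
Proof.
move=> [_ [w [eqw exposed]]]; apply/crossing_uptoP => -[d1 [m [d2 cr]]].
have /and4P[/andP[d1m md2] /andP[i1 D1] /andP[cm dm] /andP[i2 D2]] := cr.
have im : inner n.-1 m by move: i1 i2; rewrite /inner; lia.
set z1 := code_of_switch n (crossover Bc Bd m).
set z2 := code_of_switch n (crossover Bd Bc m).
have z1c : charvec R n z1 != charvec R n c.
  apply: (@charvec_switch_neq R n _ _ d2 n3).
  by rewrite /differ i2 switch_code_of_switch // /crossover (ltn_geF md2) eq_sym.
have z1d : charvec R n z1 != charvec R n d.
  apply: (@charvec_switch_neq R n _ _ d1 n3).
  by rewrite /differ i1 switch_code_of_switch // /crossover (ltnW d1m).
have z2c : charvec R n z2 != charvec R n c.
  apply: (@charvec_switch_neq R n _ _ d1 n3).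
  by rewrite /differ i1 switch_code_of_switch // /crossover (ltnW d1m) eq_sym.
have z2d : charvec R n z2 != charvec R n d.
  apply: (@charvec_switch_neq R n _ _ d2 n3).
  by rewrite /differ i2 switch_code_of_switch // /crossover (ltn_geF md2).
have sum : (dotE w (charvec R n z1) + dotE w (charvec R n z2) =
            dotE w (charvec R n c) + dotE w (charvec R n d))%R.
  rewrite /dotE -!big_split; apply: eq_bigr => e _ /=.
  by rewrite !charvecE -!mulrDr -!natrD edge_in_crossover.
by move: (exposed z1 z1c z1d) (exposed z2 z2c z2d) sum; rewrite eqw; lra.
Qed.

Lemma exists_edge_outside (z : seq bool) :
  (exists k, differ n.-1 Bc Bd k) -> crossing_free n.-1 Bc Bd ->
  charvec R n z != charvec R n c -> charvec R n z != charvec R n d ->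
  exists e : Edge n, [&& edge_in z e, ~~ edge_in c e & ~~ edge_in d e].
Proof.
move=> dif cf zc zd; apply/existsP; apply: contraT; rewrite negb_exists => /forallP inside.
have cover i j : 1 <= i -> i < j -> j <= n.-1.+1 ->
    edgeB n.-1 (switch z) i j -> edgeB n.-1 Bc i j || edgeB n.-1 Bd i j.
  move=> i1 ij jn Ez; have [e [e1 e2]] := @exists_edge n i j i1 ij ltac:(lia).
  move: (inside e); rewrite !edge_in_switch // e1 e2 Ez /=.
  by case: (edgeB _ Bc i j); case: (edgeB _ Bd i j).
have N1 : 1 < n.-1 by lia.
case: (cover_switch_eq N1 cf cover dif) => E.
  by move: zc; rewrite (charvec_switch_eq R n3 E) eqxx.
by move: zd; rewrite (charvec_switch_eq R n3 E) eqxx.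
Qed.

Lemma PYR_adjacent_of_scan :
  diff_upto c d (n - 3) -> ~~ crossing_upto c d (n - 3) -> PYR_adjacent R c d.
Proof.
move=> /diff_uptoP dif ncr.
have cf : crossing_free n.-1 Bc Bd.
  by move=> d1 m d2; apply/negP => cr; move/crossing_uptoP: ncr; apply; exists d1, m, d2.
have [k Dk] := dif; split; first exact: charvec_switch_neq n3 Dk.
pose w : {ffun Edge n -> R} := [ffun e => if edge_in c e && edge_in d e then 1%R
  else if edge_in c e || edge_in d e then 0%R else (-1)%R].
exists w; split.
  rewrite /dotE; apply: eq_bigr => e _; rewrite !charvecE ffunE.
  by case: (edge_in c e); case: (edge_in d e); rewrite ?mulr0 ?mulr1.
move=> z zc zd; have [e0 /and3P[ze0 ce0 de0]] := exists_edge_outside dif cf zc zd.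
rewrite /dotE (bigD1 e0) //= [X in (_ < X)%R](bigD1 e0) //=.
apply: ltr_leD.
  by rewrite !charvecE ffunE ze0 (negbTE ce0) (negbTE de0) /= ?mulr1n ?mulr0n; lra.
apply: ler_sum => e _; rewrite !charvecE ffunE.
by case: (edge_in z e); case: (edge_in c e); case: (edge_in d e);
  rewrite /= ?mulr1n ?mulr0n; lra.
Qed.

Lemma PYR_adjacentE :
  PYR_adjacent R c d <-> diff_upto c d (n - 3) && ~~ crossing_upto c d (n - 3).
Proof.
split=> [adj|/andP[]]; last exact: PYR_adjacent_of_scan.
by rewrite PYR_adjacent_differ ?PYR_adjacent_crossing_free.
Qed.

End Adjacency.

(* (a difference was read, a common switch after a difference was read, a crossing was
   read, side of the last vertex read in x, in y) *)
Definition scan_state := (bool * bool * bool * bool * bool)%type.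

Definition scan_start : scan_state := (false, false, false, true, true).

Definition scan_step (q : scan_state) (ab : bool * bool) : scan_state :=
  let: (dif, com, cross, px, py) := q in
  let sx := px != ab.1 in let sy := py != ab.2 in
  (dif || (sx != sy), com || (sx && sy && dif), cross || ((sx != sy) && com), ab.1, ab.2).

Definition scan_accept (q : scan_state) : bool :=
  let: (dif, _, cross, _, _) := q in dif && ~~ cross.

Lemma iota_rcons m k : iota m k.+1 = rcons (iota m k) (m + k).
Proof. by rewrite -addn1 iotaD cats1. Qed.

Lemma scan_foldl (c d : seq bool) t : size c = size d -> t <= size c ->
  foldl scan_step scan_start (take t (zip c d)) =
  (diff_upto c d t, common_after_diff_upto c d t, crossing_upto c d t,
   side c (t + 2), side d (t + 2)).
Proof.
have side_next (b : seq bool) k : side b (k.+1 + 2) = nth false b k.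
  by rewrite /side ifN_eq; [congr nth; lia | lia].
move=> Es; elim: t => [|t IH] Ht; first by rewrite take0.
have Hz : t < size (zip c d) by rewrite size_zip -Es minnn.
rewrite (take_nth (false, false) Hz) foldl_rcons IH ?(ltnW Ht) // nth_zip //.
rewrite /scan_step /= -!side_next /diff_upto /common_after_diff_upto /crossing_upto.
rewrite !iota_rcons !has_rcons (_ : 2 + t - 2 = t); last lia.
rewrite /switch (addSn t 2) -/(diff_upto c d t) -/(common_after_diff_upto c d t).
by congr (_, _, _, _, _); rewrite (addnC 2 t) orbC.
Qed.

Definition scan_tm_state := (scan_state + bool)%type.

Definition scan_delta (q : scan_tm_state) (rd : {ffun 'I_1 -> option (bool * bool)}) :
    scan_tm_state * {ffun 'I_1 -> option (bool * bool) * move} :=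
  match q with
  | inl s => if rd ord0 is Some ab then (inl (scan_step s ab), [ffun _ => (Some ab, MRight)])
             else (inr (scan_accept s), [ffun _ => (None, MStay)])
  | inr b => (inr b, [ffun _ => (None, MStay)])
  end.

Definition scan_halt (q : scan_tm_state) : option bool := if q is inr b then Some b else None.

Definition scan_tm : TM := {| tm_k := 1; tm_state := scan_tm_state;
  tm_sym := option (bool * bool); tm_blank := None; tm_input := Some;
  tm_start := inl scan_start; tm_halt := scan_halt; tm_delta := scan_delta |}.

Lemma tm_step_halted (M : TM) (cf : config M) b : tm_halt M (cst cf) = Some b -> tm_step cf = cf.
Proof. by rewrite /tm_step => ->. Qed.

Lemma tm_iter_halted (M : TM) (cf : config M) b k :
  tm_halt M (cst cf) = Some b -> tm_halt M (cst (iter k (@tm_step M) cf)) = Some b.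
Proof. by move=> H; elim: k => //= k IH; rewrite (tm_step_halted IH). Qed.

Lemma scan_tm_iter (inp : seq (bool * bool)) t : t <= size inp ->
  let cf := iter t (@tm_step scan_tm) (tm_init scan_tm inp) in
  [/\ cst cf = inl (foldl scan_step scan_start (take t inp)), forall i, chead cf i = Posz t &
      forall i p, (Posz t <= p)%R -> ctape cf i p = ctape (tm_init scan_tm inp) i p].
Proof.
elim: t => [|t IH] Ht /=; first by rewrite take0.
have [st hd tp] := IH (ltnW Ht); set cf := iter t _ _ in st hd tp *.
have rd : ctape cf ord0 (chead cf ord0) = Some (nth (false, false) inp t).
  rewrite hd tp // /tm_init /=.
  by have -> : (Posz t < Posz (size inp))%R = true by lia.
rewrite /tm_step st /= ffunE rd /=; split.
- by rewrite (take_nth (false, false) Ht) foldl_rcons.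
- by move=> i; rewrite ffunE /= hd; lia.
- move=> i p Hp; rewrite ffunE /=.
  have -> : (p == chead cf i) = false by rewrite hd; apply/eqP; lia.
  by apply: tp; lia.
Qed.

Lemma scan_tm_answers (inp : seq (bool * bool)) T : size inp < T ->
  tm_answers_within scan_tm inp T (scan_accept (foldl scan_step scan_start inp)).
Proof.
move=> HT; rewrite /tm_answers_within.
have [st hd tp] := scan_tm_iter (leqnn (size inp)).
set cf := iter (size inp) _ _ in st hd tp.
rewrite (_ : T = (T - (size inp).+1) + (size inp).+1); last lia.
rewrite iterD iterS -/cf; apply: tm_iter_halted.
rewrite /tm_step st /= ffunE hd tp // /tm_init /=.
have -> : (Posz (size inp) < Posz (size inp))%R = false by lia.
by rewrite take_size.
Qed.

Theorem theorem4 :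
  exists (M : TM) (C : nat),
    forall n : nat, 3 <= n ->
    forall c d : (n - 3).-tuple bool,
      exists b : bool,
        tm_answers_within M (zip c d) (C * n) b /\
        (forall R : realFieldType, b <-> PYR_adjacent R c d).
Proof.
exists scan_tm, 1 => n n3 c d.
exists (scan_accept (foldl scan_step scan_start (zip c d))); split.
  by apply: scan_tm_answers; rewrite size_zip !size_tuple minnn mul1n; lia.
move=> R; have Es : size c = size d by rewrite !size_tuple.
have := scan_foldl Es (leqnn (size c)).
rewrite take_oversize ?size_zip ?Es ?minnn // size_tuple => ->.
exact: iff_sym (PYR_adjacentE R c d n3).
Qed.
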